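(* Let $(V,E,d)$ be a multi-weighted game graph and $v\in V$. If the value of the mean-payoff game $\mathrm{MP}(V,E^{(1)})$ at $v$ is non-negative, then every positional optimal strategy of Player 1 (Max) in $\mathrm{MP}(V,E^{(1)})$ is winning for Player 1 from $v$ in the lexicographic energy game $\mathrm{LexEn}(V,E,d)$. If the value at $v$ is negative, then every positional optimal strategy of Player 2 (Min) in $\mathrm{MP}(V,E^{(1)})$ is winning for Player 2 from $v$ in $\mathrm{LexEn}(V,E,d)$.
   Context: A multi-weighted game graph is a tuple $(V,E,d)$ where $d\ge1$, $V=V_1\uplus V_2$ is a finite vertex set (Player 1 and Player 2 vertices), and $E\subseteq V\times\mathbb Z^d\times V$ is a finite set of edges $v\xrightarrow{\vec w}v'$, every vertex having an outgoing edge; players strictly alternate, edge weights are determined by endpoints, and not all weights are zero. Plays are infinite paths $v_0\xrightarrow{\vec w_1}v_1\cdots$; strategies map finite paths ending in a player's vertex to an outgoing edge; positional strategies depend only on the last vertex; a strategy is winning from $v$ if all plays from $v$ consistent with it are won. In $\mathrm{LexEn}(V,E,d)$, a play is won by Player 2 if there exists $1\le k\le d$ with $\limsup_n\sum_{j\le n}\vec w_j(k)=-\infty$ and $\liminf_n\sum_{j\le n}\vec w_j(\ell)<+\infty$ for all $\ell<k$; otherwise by Player 1. The weighted edge set $E^{(1)}$: define $E^{(d)}$ giving edge $v\xrightarrow{\vec w}v'$ weight $r_d=\vec w(d)$, and for $i=d-1,\dots,1$, $E^{(i)}$ giving it weight $r_i=\vec w(i)(|V|\cdot\|E^{(i+1)}\|+1)+r_{i+1}$,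 with $\|E^{(i+1)}\|$ the maximal absolute weight in $E^{(i+1)}$. The mean-payoff game $\mathrm{MP}(V,E^{(1)})$ is played on the same vertices with these integer weights; on a play with weights $u_1,u_2,\dots$, Max (Player 1) gains $\liminf_n(u_1+\dots+u_n)/n$ and Min (Player 2) loses $\limsup_n(u_1+\dots+u_n)/n$. Optimal strategies are those guaranteeing at least as good a payoff as any other strategy; positional optimal strategies exist for both players and yield a common value at each initial vertex. *)

From HB Require Import structures.
From mathcomp Require Import all_boot all_order all_algebra.
Set Implicit Arguments. Unset Strict Implicit. Unset Printing Implicit Defensive.
Import Order.TTheory GRing.Theory Num.Theory.
Local Open Scope ring_scope.

Section Game.
Variable V : finType.
(* owner x = true : x is a Player 1 (Max) vertex; false : Player 2 (Min) *)
Variable owner : V -> bool.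
Variable e : rel V.

(* A strategy: given the history of vertices before the current one and the
   current vertex, choose the next vertex. *)
Definition strategy := seq V -> V -> V.

Definition valid_strategy (pl : bool) (s : strategy) : Prop :=
  forall h x, owner x = pl -> e x (s h x).

Definition positional (s : strategy) : Prop :=
  exists f : V -> V, forall h x, s h x = f x.

Definition is_play (p : nat -> V) : Prop := forall n, e (p n) (p n.+1).

Definition hist (p : nat -> V) (n : nat) : seq V := [seq p i | i <- iota 0 n].

Definition consistent (pl : bool) (s : strategy) (u : V) (p : nat -> V) : Prop :=
  [/\ p 0%N = u, is_play p &
      forall n, owner (p n) = pl -> p n.+1 = s (hist p n) (p n)].

Definition psum (r : V -> V -> int) (p : nat -> V) (n : nat) : int :=
  \sum_(j < n) r (p j) (p j.+1).

Definition avg (r : V -> V -> int) (p : nat -> V) (n : nat) : rat :=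
  (psum r p n.+1)%:~R / (n.+1)%:R.

Definition liminf_ge (r : V -> V -> int) (p : nat -> V) (c : rat) : Prop :=
  forall eps : rat, 0 < eps ->
    exists N, forall n, (N <= n)%N -> c - eps <= avg r p n.

Definition limsup_le (r : V -> V -> int) (p : nat -> V) (c : rat) : Prop :=
  forall eps : rat, 0 < eps ->
    exists N, forall n, (N <= n)%N -> avg r p n <= c + eps.

Definition guar_max r (s : strategy) (u : V) (c : rat) : Prop :=
  forall p, consistent true s u p -> liminf_ge r p c.

Definition guar_min r (s : strategy) (u : V) (c : rat) : Prop :=
  forall p, consistent false s u p -> limsup_le r p c.

Definition optimal_max r (s : strategy) : Prop :=
  forall s', valid_strategy true s' ->
    forall u c, guar_max r s' u c -> guar_max r s u c.

Definition optimal_min r (s : strategy) : Prop :=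
  forall s', valid_strategy false s' ->
    forall u c, guar_min r s' u c -> guar_min r s u c.

Definition mp_value_ge0 r (v : V) : Prop :=
  forall eps : rat, 0 < eps ->
    exists s, valid_strategy true s /\ guar_max r s v (- eps).

Definition mp_value_lt0 r (v : V) : Prop :=
  exists c : rat, c < 0 /\ exists s, valid_strategy false s /\ guar_min r s v c.

Variable d : nat.
Variable w : V -> V -> 'I_d -> int.

(* 0-indexed coordinate k of the weight, 0 outside range *)
Definition coord (k : nat) (u u' : V) : int :=
  match (insub k : option 'I_d) with Some i => w u u' i | None => 0 end.

Definition normE (r : V -> V -> int) : nat :=
  \max_(q : V * V | e q.1 q.2) `|r q.1 q.2|%N.

(* Ew m is the weight function of E^(d-m) (paper's 1-indexed notation) *)
Fixpoint Ew (m : nat) : V -> V -> int :=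
  match m with
  | 0 => coord d.-1
  | m'.+1 => fun u u' =>
      coord (d.-1 - m)%N u u' * ((#|V| * normE (Ew m'))%N%:Z + 1) + Ew m' u u'
  end.

Definition E1 : V -> V -> int := Ew d.-1.

Definition lex_p2_wins (p : nat -> V) : Prop :=
  exists k : 'I_d,
    (forall M : int, exists N, forall n, (N <= n)%N ->
        psum (fun u u' => w u u' k) p n <= M) /\
    (forall l : 'I_d, (l < k)%N ->
        exists B : int, forall N, exists2 n, (N <= n)%N &
          psum (fun u u' => w u u' l) p n <= B).

End Game.

(* Fix a play p consistent with a positional optimal strategy.  Every cycle
   of length at most |V| formed by edges of p has non-negative E^(1)-weight
   when the strategy is Max's (negative when it is Min's): otherwise the
   opponent could follow p up to the cycle and then loop on it forever, giving
   a play of the optimal strategy whose mean payoff contradicts the sign of the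
   value.  For such short cycles the scaling in E^(1) makes the sign of the
   E^(1)-weight the sign of the first non-zero coordinate of the weight vector.
   Coordinate by coordinate, one then reaches a point of p after which all
   short cycles of the remaining edges have zero weight in the earlier
   coordinates and constant sign in the current one.  A potential for these
   edges shows that the partial sums of the current coordinate are either
   eventually bounded, with only zero-weight cycles left, or diverge; this
   decides the lexicographic energy condition. *)

From Pilot Require Import Defs.
From HB Require Import structures.
From mathcomp Require Import all_boot all_order all_algebra.
From mathcomp Require Import zify ring lra.
From Stdlib Require Import Classical.
Set Implicit Arguments. Unset Strict Implicit. Unset Printing Implicit Defensive.
Import Order.TTheory GRing.Theory Num.Theory.
Local Open Scope ring_scope.

Local Notation wcoord w k := (fun u u' => w u u' k).

Lemma int_min_exists (P : int -> Prop) (b : int) :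
  (exists x, P x) -> (forall x, P x -> b <= x) ->
  exists m, P m /\ forall x, P x -> m <= x.
Proof.
move=> [x0 Px0] lbP.
suff min_below (k : nat) x : P x -> x <= b + k%:Z ->
    exists m, P m /\ forall y, P y -> m <= y.
  by apply: (min_below (absz (x0 - b)) x0) => //; rewrite abszE; lia.
elim: k x => [|k IH] x Px le_x.
  by exists x; split=> // y Py; have := lbP _ Py; lra.
have [[y Py lt_yx]|no_lt] := classic (exists2 y, P y & y < x).
  by apply: (IH y) => //; move: le_x lt_yx; rewrite intS; lia.
exists x; split=> // y Py; rewrite leNgt; apply/negP => lt_yx.
by apply: no_lt; exists y.
Qed.

Lemma exists_int_bound (T : finType) (f : T -> int) :
  exists2 M, 0 <= M & forall x, `|f x| <= M.
Proof.
exists (\sum_x `|f x|); first exact: sumr_ge0.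
by move=> x; rewrite (bigD1 x) //= lerDl sumr_ge0.
Qed.

Section Walks.
Variable V : finType.
Implicit Types (a : V -> V -> int) (q : nat -> V) (F : V -> V -> Prop).

Definition walk F q n := forall t, (t < n)%N -> F (q t) (q t.+1).

Definition short_cycle F q n :=
  [/\ (0 < n)%N, (n <= #|V|)%N, q 0%N = q n & walk F q n].

Lemma psum0 a q : psum a q 0 = 0.
Proof. by rewrite /psum big_ord0. Qed.

Lemma psumS a q n : psum a q n.+1 = psum a q n + a (q n) (q n.+1).
Proof. by rewrite /psum big_ord_recr. Qed.

Lemma psumD a q m k :
  psum a q (m + k) = psum a q m + psum a (fun t => q (m + t)%N) k.
Proof.
rewrite /psum big_split_ord /=; congr (_ + _).
by apply: eq_bigr => i _; rewrite addnS.
Qed.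

Lemma eq_psum a q q' n :
  (forall t, (t <= n)%N -> q t = q' t) -> psum a q n = psum a q' n.
Proof. by move=> eqq; apply: eq_bigr => i _; rewrite !eqq // ltnW. Qed.

Lemma psumN a q n : psum (fun u u' => - a u u') q n = - psum a q n.
Proof. exact: sumrN. Qed.

Lemma psum_ge a q n b :
  (forall t, (t < n)%N -> b <= a (q t) (q t.+1)) -> n%:Z * b <= psum a q n.
Proof.
move=> lb; rewrite -natz mulr_natl /psum -[in b *+ n](card_ord n) -sumr_const.
by apply: ler_sum => t _; exact: lb.
Qed.

Definition reduced_weight a (phi : V -> int) u u' := a u u' + phi u - phi u'.

Lemma psum_reduced a (phi : V -> int) q n :
  psum a q n = psum (reduced_weight a phi) q n + phi (q n) - phi (q 0%N).
Proof.
elim: n => [|n IH]; first by rewrite !psum0 add0r subrr.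
by rewrite !psumS IH /reduced_weight; ring.
Qed.

Lemma exists_repeat q : exists i j, (i < j <= #|V|)%N /\ q i = q j.
Proof.
pose g (i : 'I_#|V|.+1) := q i.
have /injectivePn [i [j neq_ij gij]] : ~~ injectiveb g.
  by apply/negP => /injectiveP /leq_card; rewrite card_ord ltnn.
have [lt_ij|lt_ji|eq_ij] := ltngtP i j.
- by exists i, j; rewrite lt_ij -ltnS ltn_ord.
- by exists j, i; rewrite lt_ji -ltnS ltn_ord.
- by move: neq_ij; rewrite (val_inj eq_ij) eqxx.
Qed.

Section NonnegCycles.
Variables (F : V -> V -> Prop) (a : V -> V -> int).
Hypothesis cycle_ge0 : forall q n, short_cycle F q n -> 0 <= psum a q n.

Lemma walk_shorten q n : walk F q n -> (#|V| < n)%N ->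
  exists q' n', [/\ (n' < n)%N, walk F q' n' & psum a q' n' <= psum a q n].
Proof.
move=> wq ltVn; have [i [j [/andP [lt_ij le_jV] qij]]] := exists_repeat q.
set c := (j - i)%N; have c_gt0 : (0 < c)%N by rewrite subn_gt0.
have jE : j = (i + c)%N by rewrite subnKC // ltnW.
pose q' t := if (t <= i)%N then q t else q (t + c)%N.
have q'E t : (i <= t)%N -> q' t = q (t + c)%N.
  rewrite /q'; case: ifP => // le_ti le_it.
  have -> : t = i by apply/eqP; rewrite eqn_leq le_ti.
  by rewrite qij jE.
exists q', (n - c)%N; split; first lia.
  move=> t lt_tn; have [le_it|lt_ti] := leqP i t.
    by rewrite !q'E ?leqW // addSn; apply: wq; lia.
  by rewrite /q' lt_ti (ltnW lt_ti); apply: wq; lia.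
have cyc : 0 <= psum a (fun t => q (i + t)%N) c.
  apply: cycle_ge0; split => //.
  - by rewrite /c (leq_trans (leq_subr _ _) le_jV).
  - by rewrite addn0 -jE.
  - by move=> t lt_tc; rewrite addnS; apply: wq; lia.
have -> : (n - c = i + (n - j))%N by lia.
rewrite [in psum a q n](_ : n = i + (c + (n - j)))%N; last by lia.
rewrite !psumD (@eq_psum _ q' q i); last by move=> t le_ti; rewrite /q' le_ti.
have -> : psum a (fun t => q' (i + t)%N) (n - j) =
          psum a (fun t => q (i + (c + t)))%N (n - j).
  by apply: eq_psum => t _; rewrite q'E ?leq_addr // addnA addnAC.
lra.
Qed.

Lemma walk_psum_lb : exists b, forall q n, walk F q n -> b <= psum a q n.
Proof.
have [M M_ge0 boundM] := exists_int_bound (fun x : V * V => a x.1 x.2).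
exists (- (#|V|%:Z * M)) => q n; elim/ltn_ind: n q => n IH q wq.
have [le_nV|lt_Vn] := leqP n #|V|.
  have : n%:Z * (- M) <= psum a q n.
    by apply: psum_ge => t _; exact: (lerNnormlW (boundM (q t, q t.+1))).
  have : n%:Z * M <= #|V|%:Z * M by apply: ler_wpM2r; rewrite ?lez_nat.
  lra.
have [q' [n' [lt_n'n wq' le_q'q]]] := walk_shorten wq lt_Vn.
exact: le_trans (IH _ lt_n'n _ wq') le_q'q.
Qed.

Lemma cycle_ge0_potential :
  exists phi : V -> int, forall u u', F u u' -> phi u' <= phi u + a u u'.
Proof.
have [b lb] := walk_psum_lb.
pose reach u x := exists q n, [/\ walk F q n, q n = u & psum a q n = x].
have minP u : exists m, reach u m /\ forall x, reach u x -> m <= x.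
  apply: (int_min_exists (b := b)); first by exists 0, (fun=> u), 0%N; rewrite psum0.
  by move=> x [q [n [wq _ <-]]]; exact: lb.
have [phi phiP] := fin_all_exists minP.
exists phi => u u' Fuu'.
have [[q [n [wq qn <-]]] _] := phiP u; have [_ min_u'] := phiP u'.
pose q' t := if (t <= n)%N then q t else u'.
apply: min_u'; exists q', n.+1; split.
- move=> t; rewrite ltnS /q' => le_tn; rewrite le_tn.
  have [lt_tn|le_nt] := ltnP t n; first exact: wq.
  have -> : t = n by apply/eqP; rewrite eqn_leq le_tn.
  by rewrite qn.
- by rewrite /q' ltnn.
- by rewrite psumS /q' leqnn ltnn qn (@eq_psum _ _ q n) // => t ->.
Qed.

End NonnegCycles.
End Walks.

Lemma sum_ord_split (h : nat -> int) T t : (T <= t)%N ->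
  \sum_(j < t) h j = \sum_(j < T) h j + \sum_(T <= j < t) h j.
Proof. by move=> le_Tt; rewrite -!(big_mkord xpredT) (big_cat_nat (leq0n T) le_Tt). Qed.

Lemma sum_ge0_unbounded (h : nat -> int) :
  (forall j, 0 <= h j) -> ~ (exists N, forall j, (N <= j)%N -> h j = 0) ->
  forall c, exists T, forall t, (T <= t)%N -> c <= \sum_(j < t) h j.
Proof.
move=> h_ge0 not_ev0.
have mono T t : (T <= t)%N -> \sum_(j < T) h j <= \sum_(j < t) h j.
  by move=> le_Tt; rewrite (sum_ord_split _ le_Tt) lerDl sumr_ge0.
have pos_after T : exists2 j, (T <= j)%N & 1 <= h j.
  apply: NNPP => no_pos; apply: not_ev0; exists T => j le_Tj.
  apply/eqP; rewrite eq_le h_ge0 andbT; apply/negP => hj.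
  by apply: no_pos; exists j => //; move: hj; lia.
have reach (k : nat) : exists T, k%:Z <= \sum_(j < T) h j.
  elim: k => [|k [T leT]]; first by exists 0%N; rewrite big_ord0.
  have [j le_Tj hj] := pos_after T; exists j.+1.
  by rewrite big_ord_recr /= intS; have := mono _ _ le_Tj; lra.
move=> c; have [T leT] := reach (absz c); exists T => t le_Tt.
by have := mono _ _ le_Tt; have := ler_norm c; rewrite abszE in leT; lra.
Qed.

Section Tails.
Variables (V : finType) (p : nat -> V).

Definition tail_edge N u u' := exists2 j, (N <= j)%N & p j = u /\ p j.+1 = u'.

Lemma walk_tail_mono N N' q n :
  (N <= N')%N -> walk (tail_edge N') q n -> walk (tail_edge N) q n.
Proof.
by move=> le_NN' wq t /wq [j le_N'j pj]; exists j => //; exact: leq_trans le_N'j.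
Qed.

Lemma short_cycle_tail_mono N N' q n :
  (N <= N')%N -> short_cycle (tail_edge N') q n -> short_cycle (tail_edge N) q n.
Proof. by move=> le_NN' [? ? ? wq]; split=> //; exact: walk_tail_mono wq. Qed.

Lemma tail_walk_edges (e : rel V) N q n :
  is_play e p -> walk (tail_edge N) q n -> walk (fun u u' => e u u') q n.
Proof. by move=> play wq t /wq [j _ [<- <-]]. Qed.

Lemma exists_tail_cycle N : exists q n, short_cycle (tail_edge N) q n.
Proof.
have [i [j [/andP [lt_ij le_jV] pij]]] := exists_repeat (fun t => p (N + t)%N).
exists (fun t => p (N + i + t)%N), (j - i)%N; split.
- by rewrite subn_gt0.
- exact: leq_trans (leq_subr _ _) le_jV.
- by rewrite addn0 /= pij -addnA subnKC // ltnW.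
- by move=> t _; exists (N + i + t)%N; rewrite ?addnS // -addnA leq_addr.
Qed.

Lemma psum_potential_dichotomy a N (phi : V -> int) :
  (forall u u', tail_edge N u u' -> phi u' <= phi u + a u u') ->
  (exists2 N1, (N <= N1)%N &
     (forall q n, walk (tail_edge N1) q n -> q 0%N = q n -> psum a q n = 0) /\
     exists K, forall n, (N1 <= n)%N -> `|psum a p n| <= K)
  \/ (forall M, exists N', forall n, (N' <= n)%N -> M <= psum a p n).
Proof.
move=> potential; pose r := reduced_weight a phi.
pose h j := r (p (N + j)%N) (p (N + j.+1)%N).
have r_ge0 u u' : tail_edge N u u' -> 0 <= r u u'.
  by move=> /potential; rewrite /r /reduced_weight; lra.
have h_ge0 j : 0 <= h j by apply: r_ge0; exists (N + j)%N; rewrite ?leq_addr ?addnS.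
have [F _ boundF] := exists_int_bound phi.
have psum_tail t : psum a p (N + t)%N =
    psum a p N + \sum_(j < t) h j + phi (p (N + t)%N) - phi (p N).
  by rewrite psumD [X in _ + X](psum_reduced _ phi) addn0; ring.
have tail_split n : (N <= n)%N -> psum a p n = psum a p N + \sum_(j < n - N) h j
    + phi (p n) - phi (p N).
  by move=> le_Nn; have := psum_tail (n - N)%N; rewrite subnKC.
have [[N1 h_ev0]|not_ev0] := classic (exists N1, forall j, (N1 <= j)%N -> h j = 0).
  left; exists (N + N1)%N; first exact: leq_addr; split.
    move=> q n wq q0n; rewrite (psum_reduced _ phi) q0n addrK.
    apply: big1 => t _; have [j le_j [<- <-]] := wq t (ltn_ord t).
    rewrite -(subnKC (leq_trans (leq_addr _ _) le_j)) -addnS; apply: h_ev0; lia.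
  exists (`|psum a p N| + `|\sum_(j < N1) h j| + F + F) => n le_n.
  rewrite tail_split; last exact: leq_trans (leq_addr _ _) le_n.
  rewrite (@sum_ord_split _ N1); last by lia.
  have -> : \sum_(N1 <= j < n - N) h j = 0.
    by apply: big1_seq => j; rewrite mem_index_iota => /andP [_ /andP [/h_ev0]].
  have := boundF (p n); have := boundF (p N).
  move: (phi _) (phi _) (\sum_(j < N1) h j) (psum a p N) => x y z c; lia.
right=> M; have [T leT] := sum_ge0_unbounded h_ge0 not_ev0 (M - psum a p N + F + F).
exists (N + T)%N => n le_n.
rewrite tail_split; last exact: leq_trans (leq_addr _ _) le_n.
have := leT (n - N)%N (ltac:(lia)); have := boundF (p n); have := boundF (p N).
lia.
Qed.

End Tails.

Lemma lexi_ltr0 (x S B : int) : `|S| <= B ->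
  (x * (B + 1) + S < 0) = (x < 0) || (x == 0) && (S < 0).
Proof.
move=> bS; have B_ge0 : 0 <= B := le_trans (normr_ge0 S) bS.
have [x_lt0|x_gt0|->] := ltrgtP x 0; last by rewrite mul0r add0r.
- have : x * (B + 1) <= - (B + 1) by nia.
  by move: bS; rewrite /=; lia.
- have : B + 1 <= x * (B + 1) by nia.
  by move: bS; rewrite /=; lia.
Qed.

Section Lexicographic.
Variables (V : finType) (e : rel V) (d : nat) (w : V -> V -> 'I_d -> int).

Definition lexi_neg q n := exists k : 'I_d,
  (forall l : 'I_d, (l < k)%N -> psum (wcoord w l) q n = 0) /\
  psum (wcoord w k) q n < 0.

Lemma psum_normE (r : V -> V -> int) q n : walk (fun u u' => e u u') q n ->
  `|psum r q n| <= n%:Z * (normE e r)%:Z.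
Proof.
move=> wq; rewrite -[n in n%:Z](card_ord n) -natz mulr_natl -sumr_const.
apply: le_trans (ler_norm_sum _ _ _) (ler_sum _ _) => t _.
rewrite -abszE lez_nat.
exact: (@leq_bigmax_cond _ (fun x : V * V => e x.1 x.2) (fun x => `|r x.1 x.2|%N)
  (q t, q t.+1) (wq t (ltn_ord t))).
Qed.

(* [coord] alone would be MathComp's vector coordinate. *)
Lemma psum_Ew_ltr0 q n m : walk (fun u u' => e u u') q n -> (n <= #|V|)%N ->
  (m < d)%N ->
  psum (Ew e w m) q n < 0 <-> exists k, [/\ (d.-1 - m <= k <= d.-1)%N,
     forall l, (d.-1 - m <= l < k)%N -> psum (Defs.coord w l) q n = 0 &
     psum (Defs.coord w k) q n < 0].
Proof.
move=> wq le_nV; elim: m => [|m IH] lt_md.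
  rewrite subn0; split=> [neg|[k [/andP [le_k ge_k] _]]].
    by exists d.-1; split=> // [|l]; [rewrite leqnn | lia].
  by rewrite (_ : k = d.-1) //; apply/eqP; rewrite eqn_leq ge_k.
set b := (d.-1 - m.+1)%N; have bE : (d.-1 - m = b.+1)%N by rewrite /b; lia.
rewrite bE in IH; have {}IH := IH (ltnW lt_md).
set B := (#|V| * normE e (Ew e w m))%N.
have -> : psum (Ew e w m.+1) q n =
    psum (Defs.coord w b) q n * (B%:Z + 1) + psum (Ew e w m) q n.
  by rewrite /psum mulr_suml -big_split.
(* A walk of length at most |V| has E^(d-m)-weight of absolute value at most
   B, so the factor B + 1 makes coordinate b dominate. *)
rewrite lexi_ltr0; last first.
  apply: le_trans (psum_normE _ wq) _.
  by rewrite /B PoszM ler_wpM2r // lez_nat.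
split.
- case/orP=> [x_lt0|/andP [/eqP x0 /IH [k [/andP [le_k ge_k] zero_k neg_k]]]].
    by exists b; split=> // [|l]; [rewrite leqnn /b leq_subr|lia].
  exists k; split=> // [|l /andP [le_l lt_lk]]; first by rewrite ge_k andbT ltnW.
  have [lt_bl|] := ltnP b l; first by apply: zero_k; rewrite lt_bl.
  by move=> le_lb; rewrite (_ : l = b) //; apply/eqP; rewrite eqn_leq le_lb.
- move=> [k [/andP [le_k ge_k] zero_k neg_k]].
  have [lt_bk|] := ltnP b k; last first.
    by move=> le_kb; rewrite (_ : b = k) ?neg_k //; apply/eqP; rewrite eqn_leq le_k.
  rewrite zero_k ?leqnn // eqxx /=; apply/IH; exists k; split=> //.
    by rewrite lt_bk.
  by move=> l /andP [lt_bl lt_lk]; apply: zero_k; rewrite lt_lk ltnW.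
Qed.

Lemma psum_coord (k : 'I_d) (q : nat -> V) n :
  psum (Defs.coord w k) q n = psum (wcoord w k) q n.
Proof. by apply: eq_bigr => t _; rewrite /Defs.coord valK. Qed.

Lemma psum_E1_ltr0 q n : (0 < d)%N -> walk (fun u u' => e u u') q n ->
  (n <= #|V|)%N -> psum (E1 e w) q n < 0 <-> lexi_neg q n.
Proof.
move=> d_gt0 wq le_nV.
rewrite /E1 psum_Ew_ltr0 ?ltn_predL // subnn; split.
  move=> [k [/andP [_ ge_k] zero_k neg_k]].
  have lt_kd : (k < d)%N by rewrite -(prednK d_gt0) ltnS.
  exists (Ordinal lt_kd); rewrite -psum_coord; split=> // l lt_lk.
  by rewrite -psum_coord; apply: zero_k.
move=> [k [zero_k neg_k]]; exists k; rewrite psum_coord; split=> //.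
  by rewrite leq0n /= -ltnS prednK.
move=> l /andP [_ lt_lk]; have lt_ld := ltn_trans lt_lk (ltn_ord k).
by rewrite -[l]/(val (Ordinal lt_ld)) psum_coord; apply: zero_k.
Qed.

End Lexicographic.

Section CycleSigns.
Variables (V : finType) (d : nat) (w : V -> V -> 'I_d -> int) (p : nat -> V).

Definition zero_below (l N : nat) := forall q n, short_cycle (tail_edge p N) q n ->
  forall k : 'I_d, (k < l)%N -> psum (wcoord w k) q n = 0.

Lemma zero_below_succ N N1 (L : 'I_d) : (N <= N1)%N -> zero_below L N ->
  (forall q n, walk (tail_edge p N1) q n -> q 0%N = q n ->
     psum (wcoord w L) q n = 0) ->
  zero_below L.+1 N1.
Proof.
move=> le_NN1 zeroN zeroL q n cq k; rewrite ltnS leq_eqVlt => /orP [/eqP/val_inj ->|].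
  by case: cq => _ _ q0n wq; exact: zeroL wq q0n.
by apply: zeroN; exact: short_cycle_tail_mono cq.
Qed.

Lemma lexi_nonneg_cycles_not_p2_wins :
  (forall q n, short_cycle (tail_edge p 0) q n -> ~ lexi_neg w q n) ->
  ~ lex_p2_wins w p.
Proof.
move=> not_lexi [k [to_minus_oo finite_below]].
have cycle_ge0 (L : 'I_d) N : zero_below L N -> forall q n,
    short_cycle (tail_edge p N) q n -> 0 <= psum (wcoord w L) q n.
  move=> zN q n cq; rewrite leNgt; apply/negP => neg.
  apply: (not_lexi q n (short_cycle_tail_mono (leq0n N) cq)).
  by exists L; split=> // l; exact: zN.
have stable l : (l <= k)%N -> exists N, zero_below l N.
  elim: l => [|l IH] le_lk; first by exists 0%N.
  have [N zN] := IH (ltnW le_lk).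
  pose L := Ordinal (ltn_trans le_lk (ltn_ord k)).
  have [phi pot] := cycle_ge0_potential (cycle_ge0 L N zN).
  case: (psum_potential_dichotomy pot) => [[N1 le_NN1 [zL _]]|to_oo].
    by exists N1; exact: (@zero_below_succ N N1 L le_NN1 zN zL).
  have [B finB] := finite_below L le_lk; have [N' geN'] := to_oo (B + 1).
  by have [n le_N'n leB] := finB N'; have := geN' n le_N'n; lra.
have [N zN] := stable k (leqnn k).
have [phi pot] := cycle_ge0_potential (cycle_ge0 k N zN).
have [N1 [K lbK]] : exists N1 K, forall n, (N1 <= n)%N -> K <= psum (wcoord w k) p n.
  case: (psum_potential_dichotomy pot) => [[N1 _ [_ [K boundK]]]|to_oo].
    by exists N1, (- K) => n /boundK; lia.
  by have [N' geN'] := to_oo 0; exists N', 0.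
have [N2 leM] := to_minus_oo (K - 1).
by have := lbK _ (leq_addr N2 N1); have := leM _ (leq_addl N1 N2); lra.
Qed.

Lemma lexi_neg_cycles_p2_wins :
  (forall q n, short_cycle (tail_edge p 0) q n -> lexi_neg w q n) ->
  lex_p2_wins w p.
Proof.
move=> lexi.
have cycle_le0 (L : 'I_d) N : zero_below L N -> forall q n,
    short_cycle (tail_edge p N) q n -> 0 <= psum (fun u u' => - w u u' L) q n.
  move=> zN q n cq; rewrite psumN oppr_ge0.
  have [k [zero_k neg_k]] := lexi q n (short_cycle_tail_mono (leq0n N) cq).
  have [lt_kL|lt_Lk|/val_inj eq_kL] := ltngtP k L.
  - by move: neg_k; rewrite zN // ltxx.
  - by rewrite zero_k.
  - by rewrite -eq_kL ltW.
pose finite_liminf (L : 'I_d) := exists B, forall N,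
  exists2 n, (N <= n)%N & psum (wcoord w L) p n <= B.
have stable l : (l <= d)%N -> lex_p2_wins w p \/
    exists N, zero_below l N /\ forall L : 'I_d, (L < l)%N -> finite_liminf L.
  elim: l => [|l IH] le_ld; first by right; exists 0%N.
  case: (IH (ltnW le_ld)) => [|[N [zN finN]]]; first by left.
  pose L := Ordinal le_ld.
  have [phi pot] := cycle_ge0_potential (cycle_le0 L N zN).
  case: (psum_potential_dichotomy pot) => [[N1 le_NN1 [zL [K boundK]]]|to_oo].
    right; exists N1; split.
      apply: (@zero_below_succ N N1 L le_NN1 zN) => q n wq q0n.
      by apply/eqP; rewrite -oppr_eq0 -psumN (zL q n wq q0n).
    move=> L'; rewrite ltnS leq_eqVlt => /orP [/eqP eq_L'L|]; last exact: finN.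
    rewrite (_ : L' = L); last exact: val_inj.
    exists K => N0; exists (N0 + N1)%N; first exact: leq_addr.
    by have := boundK _ (leq_addl N0 N1); rewrite psumN normrN; lia.
  left; exists L; split; last exact: finN.
  move=> M; have [N' geN'] := to_oo (- M); exists N' => n /geN'.
  by rewrite psumN lerN2.
have [//|[N [zN _]]] := stable d (leqnn d).
have [q [n cq]] := exists_tail_cycle p N.
have [k [_ neg_k]] := lexi q n (short_cycle_tail_mono (leq0n N) cq).
by move: neg_k; rewrite zN // ltxx.
Qed.

End CycleSigns.

Lemma eventually_le0 (R : archiRealFieldType) (c b : R) N :
  (forall m, (N <= m)%N -> m%:R * c <= b) -> c <= 0.
Proof.
move=> le_b; rewrite leNgt; apply/negP => c_gt0.
set k := Num.Def.archi_bound (`|b| / c).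
have : `|b| < k%:R * c by rewrite -ltr_pdivrMr // archi_boundP // divr_ge0 // ltW.
have : k%:R <= (N + k)%N%:R :> R by rewrite ler_nat leq_addl.
by have := le_b _ (leq_addr k N); have := ler_norm b; nra.
Qed.

Lemma lasso_avg_ge (V : finType) (a : V -> V -> int) p i n (P C : int) (x : rat) N :
  (0 < n)%N -> (forall m, psum a p (i + m * n)%N = P + m%:Z * C) ->
  (forall T, (N <= T)%N -> x <= avg a p T) -> x * n%:R <= C%:~R.
Proof.
move=> n_gt0 lasso le_avg; rewrite -subr_le0.
apply: (@eventually_le0 _ _ (P%:~R - x * i%:R) N.+1) => m le_Nm.
have le_mn := leq_pmulr m n_gt0.
have T_gt0 : (0 < i + m * n)%N by lia.
have : x <= avg a p (i + m * n)%N.-1 by apply: le_avg; lia.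
rewrite /avg prednK // lasso ler_pdivlMr ?ltr0n // natrD natrM intrD intrM.
by rewrite (_ : m%:~R = m%:R :> rat) //; nra.
Qed.

Lemma lasso_play (V : finType) (owner : V -> bool) (e : rel V) (pl : bool)
    (s : strategy V) v p q n :
  positional s -> consistent owner e pl s v p ->
  (0 < n)%N -> q 0%N = q n -> walk (tail_edge p 0) q n ->
  exists r i, consistent owner e pl s v r /\ forall (a : V -> V -> int) m,
    psum a r (i + m * n)%N = psum a p i + m%:Z * psum a q n.
Proof.
move=> [f sE] [p0 play follow] n_gt0 q0n wq.
have edge_ok u u' : tail_edge p 0 u u' -> e u u' /\ (owner u = pl -> u' = f u).
  by move=> [j _ [<- <-]]; split=> // own; rewrite follow // sE.
have [i _ [pi _]] := wq 0%N n_gt0.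
pose r t := if (t <= i)%N then p t else q ((t - i) %% n)%N.
have rE t : (i <= t)%N -> r t = q ((t - i) %% n)%N.
  rewrite /r; case: ifP => // le_ti le_it.
  by rewrite (_ : t = i) ?subnn ?mod0n ?pi //; apply/eqP; rewrite eqn_leq le_ti.
have q_mod t : q (t.+1 %% n)%N = q (t %% n)%N.+1.
  rewrite -addn1 -modnDml addn1; have := ltn_pmod t n_gt0.
  rewrite leq_eqVlt => /orP [/eqP ->|lt]; first by rewrite modnn.
  by rewrite modn_small.
have r_edge t : tail_edge p 0 (r t) (r t.+1).
  have [lt_ti|le_it] := ltnP t i.
    by exists t => //; rewrite /r (ltnW lt_ti) lt_ti.
  by rewrite !rE ?leqW // subSn // q_mod; apply: wq; exact: ltn_pmod.
exists r, i; split.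
  split=> [|t|t own]; first by rewrite /r leq0n.
  - by have [] := edge_ok _ _ (r_edge t).
  - by rewrite sE; have [_ ->] := edge_ok _ _ (r_edge t).
move=> a; elim=> [|m IH].
  by rewrite mul0n addn0 mul0r addr0; apply: eq_psum => t le_ti; rewrite /r le_ti.
rewrite (_ : (i + m.+1 * n = i + m * n + n)%N); last by rewrite mulSn; lia.
rewrite psumD IH (@eq_psum _ _ _ q n); first by rewrite intS; ring.
move=> t le_tn; rewrite rE -addnA ?leq_addr // addKn modnMDl.
move: le_tn; rewrite leq_eqVlt => /orP [/eqP ->|lt_tn]; first by rewrite modnn.
by rewrite modn_small.
Qed.

Lemma avgN (V : finType) (a : V -> V -> int) p T :
  avg (fun u u' => - a u u') p T = - avg a p T.
Proof. by rewrite /avg psumN intrN mulNr. Qed.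

Section OptimalStrategies.
Variables (V : finType) (owner : V -> bool) (e : rel V) (r : V -> V -> int).

Lemma optimal_max_cycle_ge0 v s p q n :
  mp_value_ge0 owner e r v -> positional s -> optimal_max owner e r s ->
  consistent owner e true s v p -> short_cycle (tail_edge p 0) q n ->
  0 <= psum r q n.
Proof.
move=> val pos opt cp [n_gt0 _ q0n wq]; rewrite leNgt; apply/negP => C_lt0.
have [p' [i [cp' lasso]]] := lasso_play pos cp n_gt0 q0n wq.
(* Along the lasso the averages tend to (psum r q n) / n, so eps = 1/(4n)
   forces psum r q n >= -1/2. *)
pose eps : rat := (4 * n)%:R^-1.
have eps_gt0 : 0 < eps by rewrite invr_gt0 ltr0n muln_gt0.
have [s' [vs' guar]] := val eps eps_gt0.
have [N geN] := opt s' vs' v _ guar p' cp' eps eps_gt0.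
have := lasso_avg_ge n_gt0 (lasso r) geN.
have -> : (- eps - eps) * n%:R = - 2^-1.
  by rewrite /eps natrM; field; rewrite pnatr_eq0 -lt0n n_gt0.
have : (psum r q n)%:~R <= (-1)%:~R :> rat by rewrite ler_int -ltzD1.
by rewrite intrN mulr1z; lra.
Qed.

Lemma optimal_min_cycle_lt0 v s p q n :
  mp_value_lt0 owner e r v -> positional s -> optimal_min owner e r s ->
  consistent owner e false s v p -> short_cycle (tail_edge p 0) q n ->
  psum r q n < 0.
Proof.
move=> [c [c_lt0 [s' [vs' guar]]]] pos opt cp [n_gt0 _ q0n wq].
rewrite ltNge; apply/negP => C_ge0.
have [p' [i [cp' lasso]]] := lasso_play pos cp n_gt0 q0n wq.
have [N leN] := opt s' vs' v _ guar p' cp' (- c / 2) (ltac:(lra)).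
have geN T : (N <= T)%N -> - (c / 2) <= avg (fun u u' => - r u u') p' T.
  by move=> /leN; rewrite avgN; lra.
have lassoN m : psum (fun u u' => - r u u') p' (i + m * n)%N =
    - psum r p i + m%:Z * - psum r q n.
  by rewrite !psumN lasso; ring.
have := lasso_avg_ge n_gt0 lassoN geN.
have : 0 <= (psum r q n)%:~R :> rat by rewrite ler0z.
have : 0 < n%:R :> rat by rewrite ltr0n.
by rewrite intrN; nra.
Qed.

End OptimalStrategies.

Theorem mainTheorem3 (V : finType) (owner : V -> bool) (e : rel V)
  (d : nat) (w : V -> V -> 'I_d -> int)
  (hd : (0 < d)%N)
  (halt : forall u u', e u u' -> owner u != owner u')
  (hout : forall u, exists u', e u u')
  (hnz : exists u u' (i : 'I_d), e u u' /\ w u u' i != 0)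
  (v : V) :
  (mp_value_ge0 owner e (E1 e w) v ->
     forall s, valid_strategy owner e true s -> positional s ->
       optimal_max owner e (E1 e w) s ->
       forall p, consistent owner e true s v p -> ~ lex_p2_wins w p) /\
  (mp_value_lt0 owner e (E1 e w) v ->
     forall s, valid_strategy owner e false s -> positional s ->
       optimal_min owner e (E1 e w) s ->
       forall p, consistent owner e false s v p -> lex_p2_wins w p).
Proof.
split=> [val s _ pos opt p cp | val s _ pos opt p cp]; have [_ play _] := cp.
- apply: lexi_nonneg_cycles_not_p2_wins => q n cq; have [_ le_nV _ wq] := cq.
  rewrite -(psum_E1_ltr0 _ hd (tail_walk_edges play wq) le_nV).
  apply/negP; rewrite -leNgt.
  exact: optimal_max_cycle_ge0 val pos opt cp cq.
- apply: lexi_neg_cycles_p2_wins => q n cq; have [_ le_nV _ wq] := cq.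
  rewrite -(psum_E1_ltr0 _ hd (tail_walk_edges play wq) le_nV).
  exact: optimal_min_cycle_lt0 val pos opt cp cq.
Qed.
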